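(* Suppose Assumptions 1, 2 and 4 hold, and let $\mathcal{B}=\mathcal{B}_\beta\times\mathcal{B}_\gamma\subseteq\Theta$ with $\mathcal{B}_\beta\subset\mathbb{R}^k$ and $\mathcal{B}_\gamma\subset\Theta_\gamma$ compact. Then for every $\theta\in\mathcal{B}$ the matrix $$\Psi(\theta)=E\begin{pmatrix}\frac{XX'}{s(X'\gamma)} & \frac{XX'}{s(X'\gamma)}s_1(X'\gamma)e(Y,X,\theta)\\ \frac{XX'}{s(X'\gamma)}s_1(X'\gamma)e(Y,X,\theta) & \frac{XX'}{s(X'\gamma)}\{s_1(X'\gamma)e(Y,X,\theta)\}^2\end{pmatrix}$$ is positive definite.
   Context: Let $Y$ be a scalar random variable and $X$ a random $k\times1$ vector whose first component equals $1$; let $\mathcal{X}$ denote the support of $X$. Write $\mu(X)=E[Y\mid X]$ and $\sigma(X)^2=E[(Y-\mu(X))^2\mid X]$. Let $s$ be a positive scale function, write $s_j(t)=\partial^j s(t)/\partial t^j$ for $j=1,2,3$, and set $\Theta_\gamma=\{\gamma\in\mathbb{R}^k:\Pr[s(X'\gamma)>0]=1\}$ and $\Theta=\mathbb{R}^k\times\Theta_\gamma$. For $\theta=(\beta,\gamma)\in\Theta$ put $e(Y,X,\theta)=(Y-X'\beta)/s(X'\gamma)$. Assumption 1: for $a=0$ or $a=-\infty$, $s:(a,\infty)\to(0,\infty)$ is three times differentiable, strictly increasing and convex, with $\lim_{t\to a}s(t)=0$ and $\lim_{t\to\infty}s(t)=\infty$. Assumption 2: $x\mapsto\sigma(x)^2$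 is bounded away from $0$ uniformly on $\mathcal{X}$. Assumption 4: for all $\gamma\in\Theta_\gamma$, $E[XX'/s(X'\gamma)]$ is nonsingular. *)

From HB Require Import structures.
From mathcomp Require Import all_boot all_order all_algebra.
From mathcomp Require Import all_classical all_reals all_analysis.
From mathcomp Require Import measurable_realfun.
Set Implicit Arguments. Unset Strict Implicit. Unset Printing Implicit Defensive.
Import Order.TTheory GRing.Theory Num.Theory.
Import numFieldNormedType.Exports.
Local Open Scope classical_set_scope.
Local Open Scope ring_scope.

Section Defs.
Context {d : measure_display} {Omega : measurableType d} {R : realType}.

Definition xdot {k} (X : 'I_k -> Omega -> R) (b : 'cV[R]_k) (w : Omega) : R :=
  \sum_(i < k) X i w * b i ord0.

Definition xvec {k} (X : 'I_k -> Omega -> R) (w : Omega) : 'cV[R]_k :=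
  \col_i X i w.

Definition sigmaX_gen {k} (X : 'I_k -> Omega -> R) : set (set Omega) :=
  [set A | exists i B, measurable B /\ A = X i @^-1` B].

Definition sigmaX_meas {k} (X : 'I_k -> Omega -> R) (f : Omega -> R) :=
  forall B : set R, measurable B -> <<s sigmaX_gen X>> (f @^-1` B).
Definition sigmaX_meas_e {k} (X : 'I_k -> Omega -> R) (f : Omega -> \bar R) :=
  forall B : set (\bar R), measurable B -> <<s sigmaX_gen X>> (f @^-1` B).

Definition supportX (P : probability Omega R) {k} (X : 'I_k -> Omega -> R)
    : set 'cV[R]_k :=
  [set x | forall e : R, 0 < e -> (0 < P (xvec X @^-1` ball x e))%E].

(* mu : R^k -> R is (a version of) x |-> E[Y | X = x], i.e. mu(X) = E[Y|X] *)
Definition is_cond_mean (P : probability Omega R) {k} (X : 'I_k -> Omega -> R)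
    (Y : Omega -> R) (mu : 'cV[R]_k -> R) :=
  [/\ sigmaX_meas X (fun w => mu (xvec X w)),
      P.-integrable setT (EFin \o Y),
      P.-integrable setT (fun w => (mu (xvec X w))%:E) &
      forall A, <<s sigmaX_gen X>> A ->
        (\int[P]_(w in A) (Y w)%:E = \int[P]_(w in A) (mu (xvec X w))%:E)%E].

(* sig2 : R^k -> [0,+oo] is (a version of) x |-> E[(Y - mu(X))^2 | X = x] *)
Definition is_cond_var (P : probability Omega R) {k} (X : 'I_k -> Omega -> R)
    (Y : Omega -> R) (mu : 'cV[R]_k -> R) (sig2 : 'cV[R]_k -> \bar R) :=
  [/\ sigmaX_meas_e X (fun w => sig2 (xvec X w)),
      (forall x, (0 <= sig2 x)%E) &
      forall A, <<s sigmaX_gen X>> A ->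
        (\int[P]_(w in A) ((Y w - mu (xvec X w)) ^+ 2)%:E
           = \int[P]_(w in A) sig2 (xvec X w))%E].

Definition EXXf {k} (P : probability Omega R) (X : 'I_k -> Omega -> R)
    (f : Omega -> R) : 'M[R]_k :=
  \matrix_(i, j) \int[P]_(w in setT) (X i w * X j w * f w).

Definition XXf_integrable {k} (P : probability Omega R) (X : 'I_k -> Omega -> R)
    (f : Omega -> R) :=
  forall i j, P.-integrable setT (fun w => (X i w * X j w * f w)%:E).

End Defs.

Definition scale_domain {R : realType} (a : \bar R) : set R :=
  [set t | (a < t%:E)%E].

Definition assumption1 {R : realType} (a : \bar R) (s : R -> R) :=
  let D := scale_domain a in
  [/\ a = 0%E \/ a = -oo%E,
      (forall t, D t -> 0 < s t),
      (forall t, D t -> derivable s t 1 /\ derivable (derive1 s) t 1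
                        /\ derivable (derive1 (derive1 s)) t 1),
      (forall x y, D x -> D y -> x < y -> s x < s y) /\
      (forall x y l, D x -> D y -> 0 <= l <= 1 ->
          s (l * x + (1 - l) * y) <= l * s x + (1 - l) * s y) &
      [/\ (a = 0%E -> s t @[t --> 0^'+] --> 0),
      (a = -oo%E -> s t @[t --> -oo] --> 0) &
      s t @[t --> +oo] --> +oo]].

Definition posdef {R : realType} {m} (M : 'M[R]_m) :=
  M^T = M /\ forall v : 'cV[R]_m, v != 0 -> 0 < (v^T *m M *m v) ord0 ord0.

Section Psi.
Context {d : measure_display} {Omega : measurableType d} {R : realType}.
Local Open Scope ring_scope.

(* Theta_gamma = {gamma : Pr[s(X'gamma) > 0] = 1}; since s is only defined on
   (a,+oo), "s(X'gamma) > 0" includes X'gamma lying in that domain *)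
Definition Theta_gamma (P : probability Omega R) {k} (X : 'I_k -> Omega -> R)
    (a : \bar R) (s : R -> R) : set 'cV[R]_k :=
  [set g | P [set w | (a < (xdot X g w)%:E)%E /\ 0 < s (xdot X g w)] = 1%E].

Definition eres {k} (X : 'I_k -> Omega -> R) (Y : Omega -> R) (s : R -> R)
    (b g : 'cV[R]_k) (w : Omega) : R :=
  (Y w - xdot X b w) / s (xdot X g w).

Definition psi_w0 {k} (X : 'I_k -> Omega -> R) (s : R -> R) (g : 'cV[R]_k)
    (w : Omega) : R := (s (xdot X g w))^-1.
Definition psi_w1 {k} (X : 'I_k -> Omega -> R) (Y : Omega -> R) (s : R -> R)
    (b g : 'cV[R]_k) (w : Omega) : R :=
  (s (xdot X g w))^-1 * (derive1 s (xdot X g w) * eres X Y s b g w).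
Definition psi_w2 {k} (X : 'I_k -> Omega -> R) (Y : Omega -> R) (s : R -> R)
    (b g : 'cV[R]_k) (w : Omega) : R :=
  (s (xdot X g w))^-1 * (derive1 s (xdot X g w) * eres X Y s b g w) ^+ 2.

Definition Psi (P : probability Omega R) {k} (X : 'I_k -> Omega -> R)
    (Y : Omega -> R) (s : R -> R) (b g : 'cV[R]_k) : 'M[R]_(k + k) :=
  block_mx (EXXf P X (psi_w0 X s g)) (EXXf P X (psi_w1 X Y s b g))
           (EXXf P X (psi_w1 X Y s b g)) (EXXf P X (psi_w2 X Y s b g)).

Definition Psi_exists (P : probability Omega R) {k} (X : 'I_k -> Omega -> R)
    (Y : Omega -> R) (s : R -> R) (b g : 'cV[R]_k) :=
  [/\ XXf_integrable P X (psi_w0 X s g), XXf_integrable P X (psi_w1 X Y s b g)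
    & XXf_integrable P X (psi_w2 X Y s b g)].

End Psi.

From HB Require Import structures.
From mathcomp Require Import all_boot all_order all_algebra.
From mathcomp Require Import all_classical all_reals all_analysis.
From mathcomp Require Import measurable_realfun.
From mathcomp Require Import ring lra.
Set Implicit Arguments. Unset Strict Implicit. Unset Printing Implicit Defensive.
Import Order.TTheory GRing.Theory Num.Theory.
Import numFieldNormedType.Exports.
Local Open Scope classical_set_scope.
Local Open Scope ring_scope.

(* Write [v = (v1, v2)] and [u = s'(X'g) e(Y, X, theta)]. The quadratic form of
   [Psi] is [E[(X'v1 + u X'v2)^2 / s(X'g)] >= 0]. If it vanishes, then
   [X'v1 + u X'v2 = 0] a.s. As [s] is increasing and convex, [s' > 0], so on the
   sigma(X)-event [X'v2 <> 0] this writes [Y - mu(X)] as a positive multiple of a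
   sigma(X)-measurable variable; a conditionally centred variable of this kind
   vanishes, hence so does the conditional variance on that event, and
   Assumption 2 forces the event to be null. Thus [X'v2 = 0], then [X'v1 = 0]
   a.s., and the invertibility of [E[XX'/s(X'g)]] (Assumption 4) gives [v = 0]. *)

Section scale_function.
Context {R : realType}.

Lemma derive1_seq_cvg (f : R -> R) t : derivable f t 1 ->
  (fun n : nat => n.+1%:R * (f (n.+1%:R^-1 + t) - f t)) @ \oo --> derive1 f t.
Proof.
move=> df.
have dq : (fun h : R => h^-1 *: (f (h + t) - f t)) @ 0^' --> derive1 f t.
  have E : (fun h : R => h^-1 *: ((f \o shift t) (h *: (1:R)) - f t)) =
           (fun h => h^-1 *: (f (h + t) - f t)).
    by apply/funext => h; congr (_ *: (f (_ + _) - _)); exact: mulr1.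
  by move: df; rewrite /derivable E.
move/cvgr_dnbhsP : dq => /(_ (fun n => n.+1%:R^-1)) dq.
have : (fun n : nat => (n.+1%:R^-1)^-1 *: (f (n.+1%:R^-1 + t) - f t)) @ \oo
         --> derive1 f t.
  apply: dq; split; last exact: cvg_harmonic.
  by move=> n; rewrite invr_eq0 pnatr_eq0.
by under eq_fun do rewrite invrK.
Qed.

Lemma chord_slope_le (D : set R) (f : R -> R) x t y :
  (forall x y l, D x -> D y -> 0 <= l <= 1 ->
     f (l * x + (1 - l) * y) <= l * f x + (1 - l) * f y) ->
  D x -> D y -> x < t -> t < y ->
  (f t - f x) / (t - x) <= (f y - f t) / (y - t).
Proof.
move=> cvx Dx Dy xt ty.
have yx0 : 0 < y - x by lra.
pose l := (y - t) / (y - x).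
have l01 : 0 <= l <= 1.
  apply/andP; split; first by apply: divr_ge0; lra.
  by rewrite /l ler_pdivrMr // mul1r; lra.
have := cvx x y l Dx Dy l01.
have -> : l * x + (1 - l) * y = t by rewrite /l; field; rewrite gt_eqF.
move=> /(ler_wpM2l (ltW yx0)).
have -> : (y - x) * (l * f x + (1 - l) * f y) = (y - t) * f x + (t - x) * f y.
  by rewrite /l; field; rewrite gt_eqF.
rewrite ler_pdivrMr ?subr_gt0 // mulrAC ler_pdivlMr ?subr_gt0 //; lra.
Qed.

Lemma scale_domain_lt (a : \bar R) t : scale_domain a t ->
  exists x, scale_domain a x /\ x < t.
Proof.
rewrite /scale_domain /=; case: a => [r| |] //=.
- by rewrite lte_fin => rt; exists ((r + t) / 2); rewrite lte_fin; split; lra.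
- by move=> _; exists (t - 1); split; [exact: ltNyr | lra].
Qed.

Lemma open_scale_domain (a : \bar R) : open (scale_domain a).
Proof.
case: a => [r| |].
- rewrite (_ : scale_domain _ = [set x | r < x]); first exact: open_gt.
  by apply/seteqP; split => x; rewrite /scale_domain /= lte_fin.
- rewrite (_ : scale_domain _ = set0); first exact: open0.
  by apply/seteqP; split => x //=; rewrite ltNge leey.
- rewrite (_ : scale_domain _ = setT); first exact: openT.
  by apply/seteqP; split => x //= _; exact: ltNyr.
Qed.

Lemma measurable_scale_domain (a : \bar R) : measurable (scale_domain a).
Proof. by apply: open_measurable; exact: open_scale_domain. Qed.

Variables (a : \bar R) (s : R -> R).
Hypothesis A1 : assumption1 a s.

(* The derivative dominates the (positive) slope of any chord ending at [t]. *)
Lemma scale_derive1_gt0 t : scale_domain a t -> 0 < derive1 s t.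
Proof.
have [_ _ sder [sinc scvx] _] := A1; move=> Dt.
have [x [Dx xt]] := scale_domain_lt Dt.
have dq := derive1_seq_cvg (sder t Dt).1.
have m0 : 0 < (s t - s x) / (t - x).
  by apply: divr_gt0; rewrite subr_gt0 //; exact: sinc.
apply: (lt_le_trans m0); rewrite -(cvg_lim _ dq) //.
apply: limr_ge; first by apply/cvg_ex; eexists; exact: dq.
near=> n.
have h0 : 0 < n.+1%:R^-1 :> R by rewrite invr_gt0.
have Dy : scale_domain a (n.+1%:R^-1 + t).
  by apply: lt_trans Dt _; rewrite lte_fin ltrDr.
have ty : t < n.+1%:R^-1 + t by rewrite ltrDr.
have := chord_slope_le scvx Dx Dy xt ty.
by rewrite addrK invrK [X in _ <= X -> _]mulrC.
Unshelve. all: by end_near.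
Qed.

Lemma measurable_scale : measurable_fun (scale_domain a) s.
Proof.
have [_ _ sder _ _] := A1.
apply: open_continuous_measurable_fun; first exact: open_scale_domain.
move=> t /set_mem Dt; apply: differentiable_continuous.
by apply/derivable1_diffP; exact: (sder t Dt).1.
Qed.

Lemma measurable_scale_derive1 : measurable_fun (scale_domain a) (derive1 s).
Proof.
have [_ _ sder _ _] := A1.
apply: (@measurable_fun_cvg _ _ _ _
  (fun n (t : R) => n.+1%:R * (s (n.+1%:R^-1 + t) - s t))); last first.
  by move=> t Dt; exact: derive1_seq_cvg (sder t Dt).1.
move=> n; apply/measurable_funM/measurable_funB; first exact: measurable_cst.
  apply: (measurable_comp (measurable_scale_domain a)); last 2 first.
  - exact: measurable_scale.
  - exact/measurable_funD/measurable_id/measurable_cst.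
  move=> _ [t Dt <-]; apply: lt_trans Dt _.
  by rewrite lte_fin ltrDr invr_gt0 ltr0n.
exact: measurable_scale.
Qed.

End scale_function.

Section measurable_sets.
Context {R : realType} {d : measure_display} {T : measurableType d}.

Lemma measurable_gt0_set (E : set T) (f : T -> R) :
  measurable E -> measurable_fun E f -> measurable [set w | E w /\ 0 < f w].
Proof.
move=> mE mf; rewrite (_ : [set w | _] = E `&` f @^-1` `]0, +oo[).
  by apply: mf => //; exact: measurable_itv.
by apply/seteqP; split => w /=; rewrite in_itv /= andbT.
Qed.

Lemma measurable_lt0_set (E : set T) (f : T -> R) :
  measurable E -> measurable_fun E f -> measurable [set w | E w /\ f w < 0].
Proof.
move=> mE mf; rewrite (_ : [set w | _] = E `&` f @^-1` `]-oo, 0[).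
  by apply: mf => //; exact: measurable_itv.
by apply/seteqP; split => w /=; rewrite in_itv.
Qed.

Lemma measurable_neq0_set (E : set T) (f : T -> R) :
  measurable E -> measurable_fun E f -> measurable [set w | E w /\ f w != 0].
Proof.
move=> mE mf; rewrite (_ : [set w | _] = E `&` f @^-1` (~` [set 0])).
  by apply: mf => //; exact: measurableC.
by apply/seteqP; split => w /= [Ew H]; split => //; apply/eqP.
Qed.

Lemma measurable_xdot k (X : 'I_k -> T -> R) (v : 'cV[R]_k) :
  (forall i, measurable_fun setT (X i)) -> measurable_fun setT (xdot X v).
Proof.
move=> mX; apply: measurable_sum => i.
by apply: measurable_funM => //; exact: measurable_cst.
Qed.

Lemma measurable_preimage_scale_domain (a : \bar R) (F : T -> R) :
  measurable_fun setT F -> measurable [set w | (a < (F w)%:E)%E].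
Proof.
move=> mF; rewrite (_ : [set w | _] = setT `&` F @^-1` scale_domain a).
  by apply: mF => //; exact: measurable_scale_domain.
by apply/seteqP; split => w //= [].
Qed.

Lemma measurable_comp_scale_domain (a : \bar R) (F : T -> R) (h : R -> R) :
  measurable_fun setT F -> measurable_fun (scale_domain a) h ->
  measurable_fun [set w | (a < (F w)%:E)%E] (h \o F).
Proof.
move=> mF mh; apply: (measurable_comp (measurable_scale_domain a)) => //.
- by move=> _ [w Dw <-].
- exact: measurable_funS mF.
Qed.

End measurable_sets.

Section sigmaX.
Context {R : realType} {d : measure_display} {Omega : measurableType d} {k : nat}
  (X : 'I_k -> Omega -> R) (mX : forall i, measurable_fun setT (X i)).

Local Notation OX := (g_sigma_algebraType (sigmaX_gen X)).

Lemma sigmaX_measurable (A : set Omega) : <<s sigmaX_gen X>> A -> measurable A.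
Proof.
apply: smallest_sub; first exact: sigma_algebra_measurable.
by move=> _ [i [B [mB ->]]]; rewrite -(setTI (X i @^-1` B)); exact: mX.
Qed.

Lemma measurable_X_sigmaX i : measurable_fun (setT : set OX) (X i).
Proof. by move=> _ B mB; rewrite setTI; apply: sub_sigma_algebra; exists i, B. Qed.

Lemma measurable_fun_sigmaX {d' : measure_display} {T' : measurableType d'}
    (D : set Omega) (f : Omega -> T') :
  <<s sigmaX_gen X>> D -> measurable_fun (D : set OX) f -> measurable_fun D f.
Proof. by move=> sD mf _ B mB; apply: sigmaX_measurable; exact: mf. Qed.

Lemma sigmaX_measP (f : 'cV[R]_k -> R) : sigmaX_meas X (fun w => f (xvec X w)) ->
  measurable_fun (setT : set OX) (fun w => f (xvec X w)).
Proof. by move=> H _ B mB; rewrite setTI; exact: H. Qed.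

Lemma sigmaX_meas_eP (f : 'cV[R]_k -> \bar R) :
  sigmaX_meas_e X (fun w => f (xvec X w)) ->
  measurable_fun (setT : set OX) (fun w => f (xvec X w)).
Proof. by move=> H _ B mB; rewrite setTI; exact: H. Qed.

End sigmaX.

Section integration.
Context {d : measure_display} {Omega : measurableType d} {R : realType}
  (P : probability Omega R).

Lemma integrableD_EFin (D : set Omega) (f g : Omega -> R) : measurable D ->
  P.-integrable D (EFin \o f) -> P.-integrable D (EFin \o g) ->
  P.-integrable D (EFin \o (f \+ g)).
Proof.
move=> mD if_ ig; apply: (eq_integrable _ ((EFin \o f) \+ (EFin \o g))%E) => //.
exact: integrableD.
Qed.

Lemma Rintegral_sum I (r : seq I) (F : I -> Omega -> R) (D : set Omega) :
  measurable D -> (forall i, P.-integrable D (EFin \o F i)) ->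
  P.-integrable D (EFin \o (fun x => \sum_(i <- r) F i x)) /\
  \int[P]_(x in D) (\sum_(i <- r) F i x) = \sum_(i <- r) \int[P]_(x in D) F i x.
Proof.
move=> mD iF; elim: r => [|h t [it IH]].
  split.
    apply: (eq_integrable _ (cst 0%E)) => //; last exact: integrable0.
    by move=> x _; rewrite /= big_nil.
  rewrite big_nil (@eq_Rintegral _ _ _ P D (fun=> 0)); last first.
    by move=> x _; rewrite big_nil.
  by rewrite /Rintegral integral0.
have E : (fun x => \sum_(i <- h :: t) F i x) = F h \+ (fun x => \sum_(i <- t) F i x).
  by apply/funext => x; rewrite big_cons.
rewrite E big_cons -IH -RintegralD //; split => //.
exact: integrableD_EFin.
Qed.

Lemma ge0_integral_eq0_negligible (B N : set Omega) (f : Omega -> R) :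
  measurable B -> measurable N -> P N = 0%E ->
  P.-integrable B (EFin \o f) ->
  (forall w, B w -> ~ N w -> 0 <= f w) ->
  (\int[P]_(w in B) (f w)%:E = 0)%E ->
  P.-negligible [set w | B w /\ f w != 0].
Proof.
move=> mB mN N0 iB f0 I0.
have mBN : measurable (B `\` N) by exact: measurableD.
have mf : measurable_fun (B `\` N) (EFin \o f).
  by apply: measurable_funS (measurable_int P iB) => //; exact: subDsetl.
rewrite (negligible_integral mN mB iB N0) in I0.
have : (\int[P]_(w in B `\` N) `|(EFin \o f) w| = 0)%E.
  rewrite -I0; apply: eq_integral => w /set_mem [Bw Nw] /=.
  by rewrite ger0_norm // f0.
move/(ae_eq_integral_abs _ mBN mf) => [M [mM M0 HM]].
apply: (@negligibleS _ _ _ _ (N `|` M)); last first.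
  by apply: negligibleU; [exists N | exists M]; split.
move=> w [Bw fw]; have [Nw|Nw] := pselect (N w); [by left|right].
apply: HM => /= H; move: fw; rewrite (_ : f w = 0) ?eqxx //.
by have := H (conj Bw Nw); rewrite /cst => -[].
Qed.

Lemma Rintegral_ae_eq0 (N : set Omega) (f : Omega -> R) :
  measurable N -> P N = 0%E -> P.-integrable setT (EFin \o f) ->
  (forall w, ~ N w -> f w = 0) -> \int[P]_(w in setT) f w = 0.
Proof.
move=> mN N0 iT f0.
rewrite /Rintegral (negligible_integral mN _ iT N0) //.
rewrite (eq_integral (fun=> 0%E)) ?integral0 //.
by move=> w /set_mem [_ Nw] /=; rewrite f0.
Qed.

Lemma EXXf_quadE k (X : 'I_k -> Omega -> R) f (u v : 'cV[R]_k) :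
  XXf_integrable P X f ->
  P.-integrable setT (EFin \o (fun w => xdot X u w * xdot X v w * f w)) /\
  (u^T *m EXXf P X f *m v) ord0 ord0 =
    \int[P]_(w in setT) (xdot X u w * xdot X v w * f w).
Proof.
move=> iX.
pose F i j w := u i ord0 * v j ord0 * (X i w * X j w * f w).
have E : (fun w => xdot X u w * xdot X v w * f w) =
         (fun w => \sum_(i < k) \sum_(j < k) F i j w).
  apply/funext => w; rewrite /xdot !big_distrl /=; apply: eq_bigr => i _.
  rewrite big_distrr /= big_distrl /=; apply: eq_bigr => j _; rewrite /F; ring.
have iF i j : P.-integrable setT (EFin \o F i j).
  apply: (eq_integrable _ (fun w => ((u i ord0 * v j ord0)%:E *
    (X i w * X j w * f w)%:E)%E)) => //.
  exact: integrableZl.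
have iFi i : P.-integrable setT (EFin \o (fun w => \sum_(j < k) F i j w)).
  by have [] := Rintegral_sum (index_enum _) measurableT (iF i).
have [iS ES] := Rintegral_sum (index_enum _) measurableT iFi.
rewrite E ES; split => //.
rewrite !mxE; under eq_bigr do rewrite !mxE big_distrl /=.
rewrite exchange_big /=; apply: eq_bigr => i _.
have [_ ->] := Rintegral_sum (index_enum _) measurableT (iF i).
by apply: eq_bigr => j _; rewrite !mxE RintegralZl //; [ring | exact: iX].
Qed.

End integration.

Section support.
Context {R : realType} (k : nat).

Lemma ball_colE (x y : 'cV[R]_k) e :
  ball x e y <-> 0 < e /\ forall i j, `|x i j - y i j| < e.
Proof. by split => -[e0 H]; split => // i j; exact: H. Qed.

Definition ratcol (q : {ffun 'I_k -> rat}) : 'cV[R]_k := \col_i ratr (q i).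

(* Balls with rational centre and radius form a countable base. *)
Lemma rat_ball_approx (x : 'cV[R]_k) e : 0 < e ->
  exists j : {ffun 'I_k -> rat} * rat,
    ball (ratcol j.1) (ratr j.2) x /\ ball (ratcol j.1) (ratr j.2) `<=` ball x e.
Proof.
move=> e0.
have [q Hq] : exists q : 'I_k -> rat, forall i, `|x i ord0 - ratr (q i)| < e / 3.
  suff [f Hf] : {f : 'I_k -> rat & forall i, `|x i ord0 - ratr (f i)| < e / 3}.
    by exists f.
  apply: (@boolp.choice 'I_k rat (fun i q => `|x i ord0 - ratr q| < e / 3)) => i.
  have [q] := @rat_in_itvoo R (x i ord0 - e / 3) (x i ord0 + e / 3) ltac:(lra).
  rewrite in_itv /= => /andP [h1 h2]; exists q.
  by rewrite ltr_norml; apply/andP; split; lra.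
have [r] := @rat_in_itvoo R (e / 3) (e * 2 / 3) ltac:(lra).
rewrite in_itv /= => /andP [r1 r2].
exists ([ffun i => q i], r); split.
  apply/ball_colE; split; first by apply: lt_trans r1; exact: divr_gt0.
  move=> i j; rewrite (ord1 j) /ratcol !mxE ffunE /=.
  by have := Hq i; rewrite distrC => h; lra.
move=> y /ball_colE [_ H]; apply/ball_colE; split => // i j.
have := H i j; have := Hq i; rewrite (ord1 j) /ratcol !mxE ffunE /= => h1 h2.
have := ler_normD (x i ord0 - ratr (q i)) (ratr (q i) - y i ord0).
rewrite (_ : x i ord0 - ratr (q i) + (ratr (q i) - y i ord0) = x i ord0 - y i ord0).
  by lra.
by ring.
Qed.

Context {d : measure_display} {Omega : measurableType d} (P : probability Omega R)
  (X : 'I_k -> Omega -> R) (mX : forall i, measurable_fun setT (X i)).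

Lemma measurable_xvec_ball (c : 'cV[R]_k) r : measurable (xvec X @^-1` ball c r).
Proof.
have [r0|r0] := ltP 0 r; last first.
  rewrite (_ : _ @^-1` _ = set0) //; apply/seteqP; split => // w /ball_colE [] /=.
  by rewrite ltNge r0.
rewrite (_ : _ @^-1` _ =
  \bigcap_(i in [set: 'I_k]) (setT `&` X i @^-1` ball (c i ord0) r)).
  apply: fin_bigcap_measurable; first exact: finite_finset.
  move=> i _; apply: mX => //; apply: open_measurable; exact: ball_open.
apply/seteqP; split => w /=.
  by move/ball_colE => [_ H] i _; split => //; have := H i ord0; rewrite mxE.
move=> H; apply/ball_colE; split => // i j; rewrite (ord1 j) mxE.
by have [_] := H i I.
Qed.

Definition null_rat_ball (n : nat) : set Omega :=
  match unpickle n : option ({ffun 'I_k -> rat} * rat) with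
  | Some j => let A := xvec X @^-1` ball (ratcol j.1) (ratr j.2) in
              if P A == 0%E then A else set0
  | None => set0
  end.

Lemma negligible_not_supportX : P.-negligible [set w | ~ supportX P X (xvec X w)].
Proof.
apply: (@negligibleS _ _ _ _ (\bigcup_n null_rat_ball n)); last first.
  apply: negligible_bigcup => n; rewrite /null_rat_ball.
  case: (unpickle n) => [j|]; last exact: negligible_set0.
  case: eqP => [A0|_]; last exact: negligible_set0.
  exists (xvec X @^-1` ball (ratcol j.1) (ratr j.2)); split => //.
  exact: measurable_xvec_ball.
move=> w /= /existsNP [e /not_implyP [e0 /negP]]; rewrite -leNgt => Pe.
have [j [xj jsub]] := rat_ball_approx (xvec X w) e0.
exists (pickle j) => //; rewrite /null_rat_ball pickleK /=.
suff -> : P (xvec X @^-1` ball (ratcol j.1) (ratr j.2)) == 0%E by [].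
rewrite eq_le measure_ge0 andbT (le_trans _ Pe) //.
apply: le_measure; rewrite ?inE; [exact: measurable_xvec_ball.. | exact: preimage_subset].
Qed.

End support.

Lemma integral_eq0_gt0_negligible {d : measure_display} {Omega : measurableType d}
    {R : realType} (P : probability Omega R) (B N : set Omega) (Z : Omega -> R) :
  measurable B -> measurable N -> P N = 0%E ->
  P.-integrable B (EFin \o Z) -> (\int[P]_(w in B) (Z w)%:E = 0)%E ->
  (forall w, B w -> ~ N w -> 0 < Z w) -> P.-negligible B.
Proof.
move=> mB mN N0 iZ I0 Zgt0.
have negN : P.-negligible N by exists N; split.
have negZ := ge0_integral_eq0_negligible mB mN N0 iZ
  (fun w Bw Nw => ltW (Zgt0 w Bw Nw)) I0.
apply: (negligibleS _ (negligibleU negN negZ)).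
move=> w Bw; have [Nw|Nw] := pselect (N w); [by left | right; split => //].
by rewrite gt_eqF // Zgt0.
Qed.

Section conditional_moments.
Context {R : realType} {d : measure_display} {Omega : measurableType d}
  (P : probability Omega R) {k : nat} (X : 'I_k -> Omega -> R) (Y : Omega -> R)
  (mu : 'cV[R]_k -> R) (mX : forall i, measurable_fun setT (X i)).
Hypothesis cm : is_cond_mean P X Y mu.

Local Notation OX := (g_sigma_algebraType (sigmaX_gen X)).
Local Notation muX w := (mu (xvec X w)).

Lemma cond_mean_diff (A : set Omega) (Z : Omega -> R) :
  <<s sigmaX_gen X>> A ->
  (Z = fun w => Y w - muX w) \/ (Z = fun w => muX w - Y w) ->
  P.-integrable A (EFin \o Z) /\ (\int[P]_(w in A) (Z w)%:E = 0)%E.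
Proof.
have [_ iY imu cmI] := cm; move=> sA eZ.
have mA := sigmaX_measurable mX sA.
have iA (f : Omega -> \bar R) : P.-integrable setT f -> P.-integrable A f.
  exact: integrableS.
have muA : (\int[P]_(w in A) (muX w)%:E)%E \is a fin_num.
  exact: integrable_fin_num (iA _ imu).
case: eZ => ->; split.
- apply: (eq_integrable _ ((EFin \o Y) \- (fun w => (muX w)%:E))%E) => //.
  exact: integrableB (iA _ iY) (iA _ imu).
- under eq_integral do rewrite EFinB.
  by rewrite integralB_EFin // ?iA // cmI // subee.
- apply: (eq_integrable _ ((fun w => (muX w)%:E) \- (EFin \o Y))%E) => //.
  exact: integrableB (iA _ imu) (iA _ iY).
- under eq_integral do rewrite EFinB.
  by rewrite integralB_EFin // ?iA // cmI // subee.
Qed.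

(* On the sigma(X)-event [f > 0] (resp. [f < 0]) the conditionally centred
   [Y - mu(X)] is positive (resp. negative) with zero integral. *)
Lemma cond_mean_eq_on (C N : set Omega) (f r : Omega -> R) :
  <<s sigmaX_gen X>> C -> measurable_fun (C : set OX) f ->
  measurable N -> P N = 0%E ->
  (forall w, C w -> ~ N w -> 0 < r w /\ f w = r w * (Y w - muX w)) ->
  P.-negligible [set w | C w /\ Y w != muX w].
Proof.
move=> sC mf mN N0 fE.
have sB1 : <<s sigmaX_gen X>> [set w | C w /\ 0 < f w].
  exact: (@measurable_gt0_set _ _ OX).
have sB2 : <<s sigmaX_gen X>> [set w | C w /\ f w < 0].
  exact: (@measurable_lt0_set _ _ OX).
have nB1 : P.-negligible [set w | C w /\ 0 < f w].
  have [iZ I0] := cond_mean_diff sB1 (or_introl erefl).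
  apply: integral_eq0_gt0_negligible (sigmaX_measurable mX sB1) mN N0 iZ I0 _.
  move=> w [Cw fw] Nw; have [r0 fw'] := fE w Cw Nw.
  by move: fw; rewrite fw' pmulr_rgt0.
have nB2 : P.-negligible [set w | C w /\ f w < 0].
  have [iZ I0] := cond_mean_diff sB2 (or_intror erefl).
  apply: integral_eq0_gt0_negligible (sigmaX_measurable mX sB2) mN N0 iZ I0 _.
  move=> w [Cw fw] Nw; have [r0 fw'] := fE w Cw Nw.
  by move: fw; rewrite fw' pmulr_rlt0 // => h; lra.
have negN : P.-negligible N by exists N; split.
apply: (negligibleS _ (negligibleU (negligibleU nB1 nB2) negN)).
move=> w [Cw YmuX]; have [Nw|Nw] := pselect (N w); [by right | left].
have [r0 fw] := fE w Cw Nw.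
have : f w != 0 by rewrite fw mulf_eq0 negb_or gt_eqF //= subr_eq0.
by rewrite neq_lt => /orP [fw0|fw0]; [right | left].
Qed.

Variable sig2 : 'cV[R]_k -> \bar R.
Hypotheses (cv : is_cond_var P X Y mu sig2) (mY : measurable_fun setT Y).
Variable c : R.
Hypotheses (c0 : 0 < c) (A2 : forall x, supportX P X x -> (c%:E <= sig2 x)%E).

Lemma cond_mean_eq_negligible (C : set Omega) : <<s sigmaX_gen X>> C ->
  P.-negligible [set w | C w /\ Y w != muX w] -> P.-negligible C.
Proof.
have [cmX _ _ _] := cm; have [cvX cv0 cvI] := cv.
move=> sC [M [mM M0 HM]].
have mC := sigmaX_measurable mX sC.
have msig : measurable_fun C (fun w => sig2 (xvec X w)).
  apply: (measurable_fun_sigmaX mX sC).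
  by apply: (measurable_funS (@measurableT _ OX)) => //; exact: sigmaX_meas_eP.
have Isig : (\int[P]_(w in C) `|sig2 (xvec X w)| = 0)%E.
  under eq_integral do rewrite gee0_abs //.
  rewrite -cvI // (ge0_negligible_integral mM mC _ _ M0); last 2 first.
  - apply/measurable_EFinP/measurable_funX/measurable_funB => //.
      exact: measurable_funS mY.
    apply: (measurable_fun_sigmaX mX sC).
    by apply: (measurable_funS (@measurableT _ OX)) => //; exact: sigmaX_measP.
  - by move=> w _; rewrite lee_fin sqr_ge0.
  rewrite (eq_integral (fun=> 0%E)) ?integral0 //.
  move=> w /set_mem [Cw Mw]; have /eqP -> : Y w == muX w.
    by apply: contrapT => /negP YmuX; apply: Mw; apply: HM.
  by rewrite subrr expr0n.
have [M2 [mM2 M20 HM2]] := (ae_eq_integral_abs _ mC msig).1 Isig.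
have [S0 [mS0 S00 HS0]] := negligible_not_supportX P mX.
exists (M2 `|` S0); split; [exact: measurableU | by rewrite measureU0 |].
move=> w Cw; have [S0w|S0w] := pselect (S0 w); [by right | left].
apply: HM2 => sig0; have := A2 (contrapT (fun h => S0w (HS0 w h))).
by rewrite sig0 // lee_fin => /(lt_le_trans c0); rewrite ltxx.
Qed.

End conditional_moments.

Section quadratic_forms.
Context {R : realType} {d : measure_display} {Omega : measurableType d}
  (P : probability Omega R) {k : nat} (X : 'I_k -> Omega -> R).

Lemma trmx_EXXf f : (EXXf P X f)^T = EXXf P X f.
Proof. by apply/matrixP => i j; rewrite !mxE; apply: eq_Rintegral => w _; ring. Qed.

Lemma EXXf_xdot_ae0 f (v : 'cV[R]_k) (N : set Omega) :
  XXf_integrable P X f -> EXXf P X f \in unitmx ->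
  measurable N -> P N = 0%E -> (forall w, ~ N w -> xdot X v w = 0) -> v = 0.
Proof.
move=> iX unitM mN N0 v0.
suff Mv0 : EXXf P X f *m v = 0 by rewrite -(mulKmx unitM v) Mv0 mulmx0.
apply/matrixP => i j; rewrite (ord1 j) [RHS]mxE.
have [iq qE] := EXXf_quadE (delta_mx i ord0) v iX.
rewrite trmx_delta -rowE -row_mul mxE in qE.
by rewrite qE (Rintegral_ae_eq0 mN N0 iq) // => w Nw; rewrite v0 // mulr0 mul0r.
Qed.

End quadratic_forms.

Section Psi_posdef.
Context {R : realType} {d : measure_display} {Omega : measurableType d}
  (P : probability Omega R) {k : nat}
  (X : 'I_k -> Omega -> R) (Y : Omega -> R) (mu : 'cV[R]_k -> R)
  (sig2 : 'cV[R]_k -> \bar R) (a : \bar R) (s : R -> R) (b g : 'cV[R]_k).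
Hypotheses (mY : measurable_fun setT Y) (mX : forall i, measurable_fun setT (X i))
  (cm : is_cond_mean P X Y mu) (cv : is_cond_var P X Y mu sig2)
  (A1 : assumption1 a s).

Local Notation OX := (g_sigma_algebraType (sigmaX_gen X)).
Local Notation xg := (xdot X g).
Local Notation u w := (derive1 s (xg w) * eres X Y s b g w).

Let G := [set w | (a < (xg w)%:E)%E /\ 0 < s (xg w)].

Lemma sigmaX_Theta_event : <<s sigmaX_gen X>> G.
Proof.
have mxg := @measurable_xdot _ _ OX k X g (measurable_X_sigmaX (X := X)).
apply: (@measurable_gt0_set _ _ OX); first exact: measurable_preimage_scale_domain.
exact: measurable_comp_scale_domain (measurable_scale A1).
Qed.

Local Notation Q v1 v2 w :=
  (psi_w0 X s g w * (xdot X v1 w + u w * xdot X v2 w) ^+ 2).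

Lemma Psi_quadE (v1 v2 : 'cV[R]_k) :
  Psi_exists P X Y s b g ->
  P.-integrable setT (EFin \o (fun w => Q v1 v2 w)) /\
  ((col_mx v1 v2)^T *m Psi P X Y s b g *m col_mx v1 v2) ord0 ord0 =
    \int[P]_(w in setT) Q v1 v2 w.
Proof.
move=> [i0 i1 i2].
have addE (A B : 'M[R]_1) : (A + B) ord0 ord0 = A ord0 ord0 + B ord0 ord0.
  by rewrite mxE.
rewrite /Psi tr_col_mx mul_row_block mul_row_col !mulmxDl !addE.
have [j11 ->] := EXXf_quadE v1 v1 i0.
have [j21 ->] := EXXf_quadE v2 v1 i1.
have [j12 ->] := EXXf_quadE v1 v2 i1.
have [j22 ->] := EXXf_quadE v2 v2 i2.
have iD (f1 f2 : Omega -> R) : P.-integrable setT (EFin \o f1) ->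
    P.-integrable setT (EFin \o f2) -> P.-integrable setT (EFin \o (f1 \+ f2)).
  exact: integrableD_EFin.
have QE : (fun w => Q v1 v2 w) =
  (fun w => xdot X v1 w * xdot X v1 w * psi_w0 X s g w) \+
  (fun w => xdot X v2 w * xdot X v1 w * psi_w1 X Y s b g w) \+
  (fun w => xdot X v1 w * xdot X v2 w * psi_w1 X Y s b g w) \+
  (fun w => xdot X v2 w * xdot X v2 w * psi_w2 X Y s b g w).
  by apply/funext => w; rewrite /psi_w0 /psi_w1 /psi_w2 /=; ring.
rewrite QE; split; first by do 3!apply: (iD _ _) => //.
rewrite !RintegralD //; last 2 first.
- by apply: (iD _ _).
- by do 2!apply: (iD _ _) => //.
- ring.
Qed.

Variable c : R.
Hypotheses (c0 : 0 < c) (A2 : forall x, supportX P X x -> (c%:E <= sig2 x)%E).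

Local Notation q v2 w := (derive1 s (xg w) * xdot X v2 w).
Local Notation H v1 v2 w :=
  (q v2 w * xdot X b w - s (xg w) * xdot X v1 w - q v2 w * mu (xvec X w)).

Lemma measurable_sigmaX_multiple (v1 v2 : 'cV[R]_k) :
  measurable_fun ([set w | (a < (xg w)%:E)%E] : set OX)
    (fun w => q v2 w * H v1 v2 w).
Proof.
have [cmX _ _ _] := cm.
have mxO v : measurable_fun (setT : set OX) (xdot X v).
  exact: (@measurable_xdot _ _ OX k X v (measurable_X_sigmaX (X := X))).
have ms := measurable_comp_scale_domain (mxO g) (measurable_scale A1).
have ms1 := measurable_comp_scale_domain (mxO g) (measurable_scale_derive1 A1).
have mT (f : OX -> R) : measurable_fun setT f ->
    measurable_fun [set w : OX | (a < (xg w)%:E)%E] f.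
  by move=> mf; exact: measurable_funS mf.
have mq : measurable_fun [set w : OX | (a < (xg w)%:E)%E] (fun w => q v2 w).
  by apply: measurable_funM; [exact: ms1 | apply: mT; exact: mxO].
apply: measurable_funM => //; apply: measurable_funB; last first.
  by apply: measurable_funM => //; apply: mT; exact: sigmaX_measP.
apply: measurable_funB; apply: measurable_funM => //; apply: mT; exact: mxO.
Qed.

Lemma xdot_ae0_of_linear_relation (v1 v2 : 'cV[R]_k) (N : set Omega) :
  measurable N -> P N = 0%E ->
  (forall w, ~ N w -> G w /\ xdot X v1 w + u w * xdot X v2 w = 0) ->
  P.-negligible [set w | xdot X v2 w != 0].
Proof.
move=> mN N0 HN.
have mxO v : measurable_fun (setT : set OX) (xdot X v).
  exact: (@measurable_xdot _ _ OX k X v (measurable_X_sigmaX (X := X))).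
pose C := [set w : OX | G w /\ xdot X v2 w != 0].
have sC : <<s sigmaX_gen X>> C.
  apply: (@measurable_neq0_set _ _ OX); first exact: sigmaX_Theta_event.
  exact: measurable_funS (mxO v2).
have mqH : measurable_fun (C : set OX) (fun w => q v2 w * H v1 v2 w).
  apply: measurable_funS (measurable_sigmaX_multiple v1 v2) => //.
    exact: measurable_preimage_scale_domain (mxO g).
  by move=> w [[]].
have qYmu w : C w -> ~ N w -> q v2 w * (Y w - mu (xvec X w)) = H v1 v2 w.
  move=> [[_ sw] _] Nw; have [_ E] := HN w Nw.
  have v1E : xdot X v1 w = - (u w * xdot X v2 w) by rewrite -[LHS]subr0 -E; ring.
  by rewrite v1E /eres; field; rewrite gt_eqF.
have YmuC : P.-negligible [set w | C w /\ Y w != mu (xvec X w)].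
  apply: (cond_mean_eq_on mX cm sC mqH mN N0 (r := fun w => q v2 w ^+ 2)).
  move=> w Cw Nw; split; last by rewrite -(qYmu w Cw Nw); ring.
  have [[Dw _] v2w] := Cw.
  rewrite lt_neqAle sqr_ge0 andbT eq_sym sqrf_eq0 mulf_eq0 negb_or v2w andbT.
  by rewrite gt_eqF // (scale_derive1_gt0 A1).
have negN : P.-negligible N by exists N; split.
apply: (negligibleS _ (negligibleU negN
  (cond_mean_eq_negligible mX cm cv mY c0 A2 sC YmuC))).
move=> w v2w; have [Nw|Nw] := pselect (N w); [by left | right].
by split => //; exact: (HN w Nw).1.
Qed.

Hypotheses (ThG : Theta_gamma P X a s g) (PsiE : Psi_exists P X Y s b g).

Let mG : measurable G := sigmaX_measurable mX sigmaX_Theta_event.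

Lemma Theta_event_compl_null : P (~` G) = 0%E.
Proof. by rewrite probability_setC // ThG subee. Qed.

Lemma Psi_quad_integrand_ge0 v1 v2 w : G w -> 0 <= Q v1 v2 w.
Proof. by move=> [_ sw]; rewrite mulr_ge0 ?sqr_ge0 // invr_ge0 ltW. Qed.

Lemma Psi_quad_ge0 (v1 v2 : 'cV[R]_k) : 0 <= \int[P]_(w in setT) Q v1 v2 w.
Proof.
have [iQ _] := Psi_quadE v1 v2 PsiE.
have mnG := measurableC mG.
rewrite /Rintegral (negligible_integral mnG _ iQ Theta_event_compl_null) //.
apply/fine_ge0/integral_ge0 => w [_ /contrapT Gw].
by rewrite lee_fin Psi_quad_integrand_ge0.
Qed.

Hypothesis unit0 : EXXf P X (psi_w0 X s g) \in unitmx.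

Lemma Psi_quad_eq0 (v1 v2 : 'cV[R]_k) :
  \int[P]_(w in setT) Q v1 v2 w = 0 -> v1 = 0 /\ v2 = 0.
Proof.
move=> I0; have [iQ _] := Psi_quadE v1 v2 PsiE.
have mnG := measurableC mG.
have nG0 := Theta_event_compl_null.
have I0e : (\int[P]_(w in setT) (Q v1 v2 w)%:E = 0)%E.
  have := fineK (integrable_fin_num measurableT iQ).
  by rewrite -[fine _]/(Rintegral _ _ _) I0.
have negQ := ge0_integral_eq0_negligible measurableT mnG nG0 iQ
  (fun w _ nGw => Psi_quad_integrand_ge0 v1 v2 (contrapT nGw)) I0e.
have negG : P.-negligible (~` G) by exists (~` G); split.
have [N [mN N0 HN]] := negligibleU negG negQ.
have lin w : ~ N w -> G w /\ xdot X v1 w + u w * xdot X v2 w = 0.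
  move=> Nw; have Gw : G w by apply: contrapT => nGw; apply: Nw; apply: HN; left.
  split => //; have : Q v1 v2 w == 0.
    by apply: contrapT => /negP Qw; apply: Nw; apply: HN; right.
  by rewrite mulf_eq0 sqrf_eq0 /psi_w0 invr_eq0 gt_eqF ?(proj2 Gw) //= => /eqP.
have negN : P.-negligible N by exists N; split.
have [M [mM M0 HM]] := negligibleU negN (xdot_ae0_of_linear_relation mN N0 lin).
have x2 w : ~ M w -> xdot X v2 w = 0.
  move=> Mw; apply/eqP; apply: contrapT => /negP v2w.
  by apply: Mw; apply: HM; right.
have x1 w : ~ M w -> xdot X v1 w = 0.
  move=> Mw; have [_] := lin w (fun Nw => Mw (HM w (or_introl Nw))).
  by rewrite x2 // mulr0 addr0.
have [i0 _ _] := PsiE.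
by split; apply: (EXXf_xdot_ae0 i0 unit0 mM M0).
Qed.

Lemma Psi_quad_gt0 (v : 'cV[R]_(k + k)) :
  v != 0 -> 0 < (v^T *m Psi P X Y s b g *m v) ord0 ord0.
Proof.
rewrite -[v]vsubmxK => v0; have [_ ->] := Psi_quadE (usubmx v) (dsubmx v) PsiE.
rewrite lt_def Psi_quad_ge0 andbT.
by apply: contraNneq v0 => /Psi_quad_eq0 [-> ->]; rewrite col_mx0.
Qed.

End Psi_posdef.

Theorem lemmaA2 (R : realType) (d : measure_display) (Omega : measurableType d)
    (P : probability Omega R) (k : nat) (hk : (0 < k)%N)
    (X : 'I_k -> Omega -> R) (Y : Omega -> R)
    (mu : 'cV[R]_k -> R) (sig2 : 'cV[R]_k -> \bar R)
    (a : \bar R) (s : R -> R) (Bb Bg : set 'cV[R]_k) :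
  measurable_fun setT Y ->
  (forall i, measurable_fun setT (X i)) ->
  (* the first component of X equals 1 *)
  (forall w, X (@Ordinal k 0 hk) w = 1) ->
  (* mu(X) = E[Y | X] and sig2(X) = E[(Y - mu(X))^2 | X] *)
  is_cond_mean P X Y mu ->
  is_cond_var P X Y mu sig2 ->
  (* Assumption 1 *)
  assumption1 a s ->
  (* Assumption 2 *)
  (exists c : R, 0 < c /\ forall x, supportX P X x -> (c%:E <= sig2 x)%E) ->
  (* Assumption 4 *)
  (forall g, Theta_gamma P X a s g ->
     XXf_integrable P X (psi_w0 X s g) /\ EXXf P X (psi_w0 X s g) \in unitmx) ->
  (* B = B_beta x B_gamma, compact, B_gamma inside Theta_gamma *)
  compact Bb -> compact Bg -> Bg `<=` Theta_gamma P X a s ->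
  (* Psi(theta) is well defined on B *)
  (forall b g, Bb b -> Bg g -> Psi_exists P X Y s b g) ->
  forall b g, Bb b -> Bg g -> posdef (Psi P X Y s b g).
Proof.
move=> mY mX _ cm cv A1 [c [c0 A2]] A4 _ _ BgTheta PsiE b g Bb_b Bg_g.
have ThG := BgTheta g Bg_g.
have [_ unit0] := A4 g ThG.
split; first by rewrite /Psi tr_block_mx !trmx_EXXf.
move=> v; apply: (Psi_quad_gt0 mY mX cm cv A1 c0 A2 ThG (PsiE b g Bb_b Bg_g) unit0).
Qed.
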